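(* Let $D$ be an infinite commutative unital integral domain. The graded pair $(R,S)$ is relatively free in the variety of graded pairs determined by $Id(M_2(D),sl_2(D))$. That is: $(R,S)$ satisfies every weak graded identity of $(M_2(D),sl_2(D))$, and for every graded pair $(A,L)$ satisfying all weak graded identities of $(M_2(D),sl_2(D))$ and every choice of elements $a_i\in L\cap A^{(0)}$, $b_i\in L\cap A^{(1)}$ ($i\ge1$), there is a unique homomorphism of graded unital algebras $\psi\colon R\to A$ with $\psi(Y_i)=a_i$, $\psi(Z_i)=b_i$ for all $i$, and it satisfies $\psi(S)\subseteq L$.
   Context: Let $Y=\{y_1,y_2,\dots\}$ and $Z=\{z_1,z_2,\dots\}$ be disjoint countable sets of variables, $X=Y\cup Z$, and let $D\langle X\rangle$ be the free unital associative $D$-algebra on $X$, $\mathbb{Z}_2$-graded by declaring the $y_i$ even and the $z_i$ odd (a monomial is even iff it contains an even number of letters from $Z$, counted with multiplicity). Let $L\langle X\rangle$ be the Lie subalgebra of $D\langle X\rangle$ (with bracket $[a,b]=ab-ba$) generated by $X$, with the induced grading $L\langle X\rangle^{(0)}\oplus L\langle X\rangle^{(1)}$. A graded pair $(A,L)$ consists of a $\mathbb{Z}_2$-graded associative unital $D$-algebra $A=A^{(0)}\oplus A^{(1)}$ and a Lie subalgebra $L$ of $A$ (under the commutator) with $L=(L\cap A^{(0)})\oplus(L\cap A^{(1)})$. A polynomial $f(y_1,\dots,y_k,z_1,\dots,z_m)\in D\langle X\rangle$ is a weak graded identity of $(A,L)$ if $f$ vanishes under every substitution of each $y_i$ by an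 element of $L\cap A^{(0)}$ and each $z_j$ by an element of $L\cap A^{(1)}$; $Id(A,L)$ denotes the set of all weak graded identities of $(A,L)$. $M_2(D)$ is graded with diagonal matrices even and off-diagonal matrices odd, and $sl_2(D)$ (traceless matrices) carries the induced grading. Let $\mathcal{A}=D[\alpha_i,\beta_i,\gamma_i\mid i\ge1]$ be the commutative polynomial ring and in $M_2(\mathcal A)$ put $Y_i=\begin{pmatrix}\alpha_i&0\\0&-\alpha_i\end{pmatrix}$, $Z_i=\begin{pmatrix}0&\beta_i\\ \gamma_i&0\end{pmatrix}$. Let $R$ be the unital associative subalgebra of $M_2(\mathcal A)$ generated by all $Y_i,Z_i$, and $S$ the Lie subalgebra (under the commutator) generated by them; $R=R_0\oplus R_1$ is graded with the $Y_i$ even and the $Z_i$ odd, and $S$ has the induced grading $S_i=S\cap R_i$. *)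

From HB Require Import structures.
From mathcomp Require Import all_boot all_algebra.
From mathcomp Require Import finmap.
From mathcomp.multinomials Require Import monalg.

Set Implicit Arguments.
Unset Strict Implicit.
Unset Printing Implicit Defensive.

Import GRing.Theory.
Local Open Scope ring_scope.

(* Letters: (false, i) stands for y_i (even), (true, i) for z_i (odd).  *)
Definition letter : choiceType := (bool * nat)%type.

Definition freeAlg (D : nzRingType) := {malg D[{fmonom letter}]}.

Definition feval (D : nzRingType) (A : pzRingType) (sc : D -> A)
    (s : letter -> A) (f : freeAlg D) : A :=
  \sum_(m <- msupp f) sc f@_m * \prod_(x <- fmonom_val m) s x.

Definition weak_graded_identity (D : nzRingType) (A : pzRingType)
    (sc : D -> A) (A0 A1 L : A -> Prop) (f : freeAlg D) : Prop :=
  forall s : letter -> A,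
    (forall i, L (s (false, i)) /\ A0 (s (false, i))) ->
    (forall i, L (s (true, i)) /\ A1 (s (true, i))) ->
    feval sc s f = 0.

(* Graded pairs (A, L).  The grading is Ag : bool -> A -> Prop with
   Ag false = A^(0), Ag true = A^(1). *)
Definition submodule (D : nzRingType) (A : lmodType D) (P : A -> Prop) :=
  [/\ P 0, (forall x y, P x -> P y -> P (x + y))
         & (forall (d : D) x, P x -> P (d *: x))].

Definition graded_algebra (D : comNzRingType) (A : algType D)
    (Ag : bool -> A -> Prop) : Prop :=
  [/\ submodule (Ag false) /\ submodule (Ag true),
      (forall a, exists a0 a1, [/\ Ag false a0, Ag true a1 & a = a0 + a1]),
      (forall a, Ag false a -> Ag true a -> a = 0),
      Ag false 1
    & (forall (i j : bool) x y, Ag i x -> Ag j y -> Ag (i (+) j) (x * y))].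

Definition lie_subalgebra (D : comNzRingType) (A : algType D) (L : A -> Prop) :=
  submodule L /\ (forall x y, L x -> L y -> L (x * y - y * x)).

Definition graded_pair (D : comNzRingType) (A : algType D)
    (Ag : bool -> A -> Prop) (L : A -> Prop) : Prop :=
  [/\ graded_algebra Ag, lie_subalgebra L
    & (forall x, L x -> exists x0 x1,
          [/\ L x0, Ag false x0, L x1, Ag true x1 & x = x0 + x1])].

Definition M2grading (D : comNzRingType) (b : bool) (m : 'M[D]_2) : Prop :=
  if b then m 0 0 = 0 /\ m 1 1 = 0 else m 0 1 = 0 /\ m 1 0 = 0.

Definition sl2 (D : comNzRingType) (m : 'M[D]_2) : Prop := \tr m = 0.

Definition Id_M2sl2 (D : comNzRingType) (f : freeAlg D) : Prop :=
  weak_graded_identity (fun d : D => d%:A : 'M[D]_2)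
    (M2grading false) (M2grading true) (@sl2 D) f.

(* The generic matrices.  calA = D[alpha_i, beta_i, gamma_i | i],
   variable (i, 0) = alpha_i, (i, 1) = beta_i, (i, 2) = gamma_i. *)
Definition genvar : choiceType := (nat * 'I_3)%type.

Definition calA (D : comNzRingType) := {malg D[{cmonom genvar}]}.

Definition gvar (D : comNzRingType) (i : nat) (k : 'I_3) : calA D :=
  mkmalgU (ucm ((i, k) : genvar)) 1.

Definition mx2 (T : nzRingType) (a b c d : T) : 'M[T]_2 :=
  \matrix_(r < 2, s < 2)
    if r == 0 :> nat then (if s == 0 :> nat then a else b)
    else (if s == 0 :> nat then c else d).

Definition Ygen (D : comNzRingType) (i : nat) : 'M[calA D]_2 :=
  mx2 (gvar D i 0) 0 0 (- gvar D i 0).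

Definition Zgen (D : comNzRingType) (i : nat) : 'M[calA D]_2 :=
  mx2 0 (gvar D i 1) (gvar D i 2) 0.

Definition scA (D : comNzRingType) (d : D) (m : 'M[calA D]_2) : 'M[calA D]_2 :=
  (d%:MP : calA D) *: m.

Inductive inR (D : comNzRingType) : 'M[calA D]_2 -> Prop :=
  | inR_1 : inR 1
  | inR_Y i : inR (Ygen D i)
  | inR_Z i : inR (Zgen D i)
  | inR_add x y : inR x -> inR y -> inR (x + y)
  | inR_mul x y : inR x -> inR y -> inR (x * y)
  | inR_scale (d : D) x : inR x -> inR (scA d x).

Inductive Rgrad (D : comNzRingType) : bool -> 'M[calA D]_2 -> Prop :=
  | Rgrad_1 : Rgrad false 1
  | Rgrad_Y i : Rgrad false (Ygen D i)
  | Rgrad_Z i : Rgrad true (Zgen D i)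
  | Rgrad_add b x y : Rgrad b x -> Rgrad b y -> Rgrad b (x + y)
  | Rgrad_mul b c x y : Rgrad b x -> Rgrad c y -> Rgrad (b (+) c) (x * y)
  | Rgrad_scale b (d : D) x : Rgrad b x -> Rgrad b (scA d x).

Inductive inS (D : comNzRingType) : 'M[calA D]_2 -> Prop :=
  | inS_Y i : inS (Ygen D i)
  | inS_Z i : inS (Zgen D i)
  | inS_add x y : inS x -> inS y -> inS (x + y)
  | inS_scale (d : D) x : inS x -> inS (scA d x)
  | inS_br x y : inS x -> inS y -> inS (x * y - y * x).

(* psi : R -> A is a homomorphism of graded unital D-algebras
   (psi is given as a function on M_2(calA); only its values on R matter) *)
Definition graded_alg_hom_on_R (D : comNzRingType) (A : algType D)
    (Ag : bool -> A -> Prop) (psi : 'M[calA D]_2 -> A) : Prop :=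
  [/\ psi 1 = 1,
      (forall x y, inR x -> inR y -> psi (x + y) = psi x + psi y),
      (forall x y, inR x -> inR y -> psi (x * y) = psi x * psi y),
      (forall (d : D) x, inR x -> psi (scA d x) = d *: psi x)
    & (forall b x, Rgrad b x -> Ag b (psi x))].

From HB Require Import structures.
From mathcomp Require Import all_boot all_algebra.
From mathcomp Require Import finmap.
From mathcomp.multinomials Require Import monalg.
From Stdlib Require Import ClassicalEpsilon.

(* Let [geval] evaluate D<X> at the generic matrices.  Specialising the
   variables alpha_i, beta_i, gamma_i turns the generic matrices into an
   arbitrary graded substitution into (M_2(D), sl_2(D)), so the kernel of
   [geval] consists of identities.  Conversely, an entry of an evaluation of
   an identity in (R, S) is a polynomial vanishing at every point of D, hence
   zero because D is infinite: (R, S) satisfies the identities.  Since R is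
   the image of [geval], an evaluation in a pair (A, L) satisfying the
   identities kills the kernel of [geval] and factors through R; the factor
   map is the required homomorphism, unique because the Y_i, Z_i generate R,
   and it sends S into L because S is generated by them under commutators. *)

Set Implicit Arguments.
Unset Strict Implicit.
Unset Printing Implicit Defensive.

Import GRing.Theory.
Local Open Scope fset_scope.
Local Open Scope ring_scope.

Section FreeAlgebraEvaluation.
Variables (D : nzRingType) (A : pzRingType) (sc : {rmorphism D -> A}).
Variable s : letter -> A.

Definition fmonom_eval (m : {fmonom letter}) : A := \prod_(x <- fmonom_val m) s x.

Lemma fevalEw (d : {fset {fmonom letter}}) (f : freeAlg D) :
  msupp f `<=` d -> feval sc s f = \sum_(m <- d) sc f@_m * fmonom_eval m.
Proof.
move=> le; rewrite /feval; apply: big_fset_incl => // m _ /mcoeff_outdom ->.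
by rewrite rmorph0 mul0r.
Qed.

Lemma feval0 : feval sc s 0 = 0.
Proof. by rewrite /feval msupp0 big_seq_fset0. Qed.

Lemma fevalD f g : feval sc s (f + g) = feval sc s f + feval sc s g.
Proof.
rewrite (@fevalEw (msupp f `|` msupp g)) ?msuppD_le //.
rewrite (@fevalEw (msupp f `|` msupp g) f) ?fsubsetUl //.
rewrite (@fevalEw (msupp f `|` msupp g) g) ?fsubsetUr //.
by rewrite -big_split /=; apply: eq_bigr => m _; rewrite mcoeffD rmorphD mulrDl.
Qed.

Lemma fevalN f : feval sc s (- f) = - feval sc s f.
Proof.
rewrite /feval msuppN -sumrN; apply: eq_bigr => m _.
by rewrite mcoeffN rmorphN mulNr.
Qed.

Lemma fevalB f g : feval sc s (f - g) = feval sc s f - feval sc s g.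
Proof. by rewrite fevalD fevalN. Qed.

Lemma feval_sum (I : Type) (r : seq I) (F : I -> freeAlg D) :
  feval sc s (\sum_(i <- r) F i) = \sum_(i <- r) feval sc s (F i).
Proof. exact: (big_morph _ fevalD feval0). Qed.

Lemma fevalU c m : feval sc s << c *g m >> = sc c * fmonom_eval m.
Proof.
rewrite /feval msuppU; have [->|_] := eqVneq c 0.
  by rewrite big_seq_fset0 rmorph0 mul0r.
by rewrite big_seq_fset1 mcoeffUU.
Qed.

Lemma fmonom_evalM m1 m2 :
  fmonom_eval (mmul m1 m2) = fmonom_eval m1 * fmonom_eval m2.
Proof. by rewrite /fmonom_eval -[mmul m1 m2]/(fmmul m1 m2) fmmulE big_cat. Qed.

Lemma fmonom_eval1 : fmonom_eval mone = 1.
Proof. by rewrite /fmonom_eval -[mone]/(fmone letter) fmoneE big_nil. Qed.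

Lemma feval1 : feval sc s 1 = 1.
Proof. by rewrite -[1]/<< (1 : D) *g mone >> fevalU rmorph1 mul1r fmonom_eval1. Qed.

Lemma feval_letter x : feval sc s << fmu x >> = s x.
Proof. by rewrite fevalU rmorph1 mul1r /fmonom_eval fmuE big_seq1. Qed.

Hypothesis sc_central : forall d a, sc d * a = a * sc d.

Lemma fevalM f g : feval sc s (f * g) = feval sc s f * feval sc s g.
Proof.
rewrite malgME feval_sum [feval sc s f]/feval mulr_suml; apply: eq_bigr => m1 _.
rewrite feval_sum [feval sc s g]/feval mulr_sumr; apply: eq_bigr => m2 _.
rewrite fevalU rmorphM fmonom_evalM -!mulrA; congr (_ * _).
by rewrite !mulrA sc_central.
Qed.

Lemma fevalZ c f : feval sc s (c *: f) = sc c * feval sc s f.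
Proof.
rewrite -mul_malgC fevalM -[c%:MP]/<< c *g mone >> fevalU.
by rewrite fmonom_eval1 mulr1.
Qed.

End FreeAlgebraEvaluation.

Lemma eq_feval (D : nzRingType) (A : pzRingType) (sc sc' : D -> A)
    (s s' : letter -> A) f :
  sc =1 sc' -> s =1 s' -> feval sc s f = feval sc' s' f.
Proof.
move=> eq_sc eq_s; rewrite /feval; apply: eq_bigr => m _.
by rewrite eq_sc; congr (_ * _); apply: eq_bigr.
Qed.

Lemma rmorph_feval (D : nzRingType) (A B : pzRingType) (phi : {rmorphism A -> B})
    (sc : D -> A) (s : letter -> A) f :
  phi (feval sc s f) = feval (phi \o sc) (phi \o s) f.
Proof.
by rewrite /feval rmorph_sum; apply: eq_bigr => m _; rewrite rmorphM rmorph_prod.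
Qed.

Section PointEvaluation.
Variables (D : comNzRingType) (I : choiceType).
Implicit Types (v : I -> D) (m : cmonom I) (k : I).

Definition cmonom_eval v m : D := \prod_(i <- finsupp m) v i ^+ m i.

Lemma cmonom_evalEw v m (d : {fset I}) :
  finsupp m `<=` d -> cmonom_eval v m = \prod_(i <- d) v i ^+ m i.
Proof.
move=> le; rewrite /cmonom_eval; apply: big_fset_incl => // i _.
by rewrite -cmE_eq0 => /eqP ->; rewrite expr0.
Qed.

Lemma cmonom_eval_mmorphism v : mmorphism (cmonom_eval v).
Proof.
split=> [m1 m2|]; last by rewrite /cmonom_eval mdom1 big_seq_fset0.
rewrite (@cmonom_evalEw v (mmul m1 m2) (finsupp m1 `|` finsupp m2)) ?mdomD //.
rewrite (@cmonom_evalEw v m1 (finsupp m1 `|` finsupp m2)) ?fsubsetUl //.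
rewrite (@cmonom_evalEw v m2 (finsupp m1 `|` finsupp m2)) ?fsubsetUr //.
by rewrite -big_split; apply: eq_bigr => i _; rewrite cmM exprD.
Qed.

HB.instance Definition _ v :=
  isMultiplicative.Build (cmonom I) D (cmonom_eval v) (cmonom_eval_mmorphism v).

Definition peval v : {malg D[{cmonom I}]} -> D :=
  mmap (idfun : D -> D) (cmonom_eval v).
HB.instance Definition _ v := GRing.RMorphism.on (peval v).

Definition cvar k : {malg D[{cmonom I}]} := << ucm k >>.

Lemma pevalU v c m : peval v << c *g m >> = c * cmonom_eval v m.
Proof. exact: mmapU. Qed.

Lemma pevalC v c : peval v c%:MP = c.
Proof. exact: mmapC. Qed.

Lemma peval_cvar v k : peval v (cvar k) = v k.
Proof. by rewrite pevalU mul1r /cmonom_eval mdomU big_seq_fset1 cmUU expr1. Qed.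

Fixpoint cmonom_pow k (j : nat) : cmonom I :=
  if j is j'.+1 then mmul (ucm k) (cmonom_pow k j') else mone.

Lemma cmonom_powE k j i : cmonom_pow k j i = (j * (k == i))%N.
Proof. by elim: j => [|j IH] /=; rewrite ?cm1 // cmM IH cmU mulSn. Qed.

Lemma cvarX k j : cvar k ^+ j = << cmonom_pow k j >>.
Proof.
elim: j => [|j IH]; first by rewrite expr0.
by rewrite exprS IH /cvar malgM_def fgmulUU mulr1; exact: erefl.
Qed.

Definition cmonom_drop k m := divcm m (cmonom_pow k (m k)).

Lemma cmonom_dropE k m i : cmonom_drop k m i = if i == k then 0%N else m i.
Proof.
rewrite divcmE cmonom_powE eq_sym.
by have [->|_] := eqVneq i k; rewrite ?muln1 ?subnn ?muln0 ?subn0.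
Qed.

Lemma cmonom_drop_powK k m : mmul (cmonom_drop k m) (cmonom_pow k (m k)) = m.
Proof.
apply/eqP/cmP => i; rewrite cmM cmonom_dropE cmonom_powE eq_sym.
by have [->|_] := eqVneq i k; rewrite ?muln1 ?muln0 ?addn0.
Qed.

Lemma mem_finsupp_drop k m i :
  i \in finsupp (cmonom_drop k m) -> (i != k) && (i \in finsupp m).
Proof.
rewrite -!cmE_neq0 cmonom_dropE.
by have [->|_] := eqVneq i k; rewrite ?eqxx.
Qed.

End PointEvaluation.

Section VariableExpansion.
Variables (D : comNzRingType) (I : choiceType).
Implicit Types (e : {malg D[{cmonom I}]}) (k : I) (ks : seq I).

Definition vars_in ks e := forall m, m \in msupp e -> {subset finsupp m <= ks}.

Lemma vars_in_nil e : vars_in [::] e -> e = (e@_mone)%:MP.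
Proof.
move=> e_const; have supp1 m : m \in msupp e -> m = mone.
  move=> /e_const sub; apply/eqP/cmP => i; rewrite cm1; apply/eqP.
  by rewrite cmE_eq0; apply/negP => /sub.
apply/malgP => m; rewrite mcoeffC; have [->|ne] := eqVneq m mone => //.
by rewrite mcoeff_outdom //; apply: contra ne => /supp1 ->.
Qed.

Definition coef_var k e (j : nat) : {malg D[{cmonom I}]} :=
  \sum_(m <- msupp e | m k == j) << e@_m *g cmonom_drop k m >>.

Definition var_bound k e := (\max_(m <- msupp e) m k).+1.

Lemma expand_var k e :
  e = \sum_(j < var_bound k e) coef_var k e j * cvar D k ^+ j.
Proof.
under eq_bigr => j _.
  rewrite mulr_suml (eq_bigr (fun m => << e@_m *g m >>)); last first.
    move=> m /eqP <-; rewrite cvarX malgM_def fgmulUU mulr1 cmonom_drop_powK.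
    exact: erefl.
  rewrite big_mkcond.
over.
rewrite exchange_big /= {1}(monalgE e); apply: eq_big_seq => m e_m.
have lt_mk : (m k < var_bound k e)%N by rewrite ltnS; apply: leq_bigmax_seq.
rewrite (bigD1 (Ordinal lt_mk)) //= eqxx big1 ?addr0 // => j ne_j.
by rewrite ifF //; apply: contraNF ne_j => /eqP mk; apply/eqP/val_inj.
Qed.

Lemma vars_in_coef_var k ks e j :
  vars_in (k :: ks) e -> vars_in ks (coef_var k e j).
Proof.
move=> e_ks m'; rewrite -mcoeff_neq0 /coef_var raddf_sum /=.
have [/hasP[m e_m /eqP <-] _ i|/hasPn no_m] :=
  boolP (has (fun m => cmonom_drop k m == m') (msupp e)); last first.
  rewrite big1_seq ?eqxx // => m /andP[_ /no_m].
  by rewrite mcoeffU => /negbTE ->; rewrite mulr0n.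
case/mem_finsupp_drop/andP => ne_ik /(e_ks _ e_m).
by rewrite in_cons (negbTE ne_ik).
Qed.

Lemma peval_coef_var_set k e j (v : I -> D) t :
  peval (fun i => if i == k then t else v i) (coef_var k e j)
  = peval v (coef_var k e j).
Proof.
rewrite /coef_var !raddf_sum; apply: eq_bigr => m _ /=.
rewrite !pevalU; congr (_ * _).
rewrite /cmonom_eval; apply: eq_big_seq => i /mem_finsupp_drop/andP[ne_ik _].
by rewrite (negbTE ne_ik).
Qed.

End VariableExpansion.

Section PolynomialIdentity.
Variables (D : idomainType) (I : choiceType).
Hypothesis D_infinite : forall s : seq D, exists d : D, d \notin s.

Lemma poly_eq0_infinite (q : {poly D}) : (forall t, q.[t] = 0) -> q = 0.
Proof.
have [s [uniq_s size_s]] : exists s : seq D, uniq s /\ size s = size q.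
  elim: (size q) => [|n [s [uniq_s <-]]]; first by exists [::].
  by have [d s'd] := D_infinite s; exists (d :: s); rewrite /= s'd uniq_s.
move=> q0; apply: (roots_geq_poly_eq0 (rs := s)) => //; last by rewrite size_s.
by apply/allP => x _; rewrite /root q0.
Qed.

Lemma peval_eq0_vars_in ks (e : {malg D[{cmonom I}]}) :
  vars_in ks e -> (forall v, peval v e = 0) -> e = 0.
Proof.
elim: ks e => [|k ks IH] e e_ks e0.
  have := e0 (fun=> 0); rewrite (vars_in_nil e_ks) pevalC => e1_0.
  by move: (vars_in_nil e_ks); rewrite e1_0 malgC0E.
rewrite (expand_var k e) big1 // => j _.
suff -> : coef_var k e j = 0 by rewrite mul0r.
apply: IH => [|v]; first exact: vars_in_coef_var.
pose q := \poly_(i < var_bound k e) peval v (coef_var k e i).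
have /(congr1 (fun p : {poly D} => p`_j)) : q = 0.
  apply: poly_eq0_infinite => t; rewrite horner_poly.
  transitivity (peval (fun i => if i == k then t else v i) e); last exact: e0.
  rewrite [in RHS](expand_var k e) rmorph_sum.
  apply: eq_bigr => i _; rewrite rmorphM rmorphXn /= peval_cvar eqxx.
  by rewrite peval_coef_var_set.
by rewrite coef_poly ltn_ord coef0.
Qed.

Lemma peval_eq0 (e : {malg D[{cmonom I}]}) : (forall v, peval v e = 0) -> e = 0.
Proof.
have : vars_in (flatten [seq (finsupp m : seq I) | m : cmonom I <- msupp e]) e.
  by move=> m e_m i m_i; apply/flatten_mapP; exists m.
exact: peval_eq0_vars_in.
Qed.

End PolynomialIdentity.

Section TwoByTwo.
Variable R : comNzRingType.
Implicit Types M N : 'M[R]_2.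

Lemma mx2_eta M : M = mx2 (M 0 0) (M 0 1) (M 1 0) (M 1 1).
Proof.
apply/matrixP => i j; rewrite mxE.
by case: i => [[|[|i]] ?] //; case: j => [[|[|j]] ?] //=; congr (M _ _); apply: val_inj.
Qed.

Lemma mxtrace2 M : \tr M = M 0 0 + M 1 1.
Proof. by rewrite /mxtrace big_ord_recl big_ord1; congr (_ + M _ _); apply: val_inj. Qed.

Lemma mulmx2E M N i j : (M * N) i j = M i 0 * N 0 j + M i 1 * N 1 j.
Proof.
rewrite -mulmxE mxE big_ord_recl big_ord1.
by congr (_ + M _ _ * N _ _); apply: val_inj.
Qed.

End TwoByTwo.

Lemma map_mx2 (R S : comNzRingType) (f : {rmorphism R -> S}) (a b c d : R) :
  map_mx f (mx2 a b c d) = mx2 (f a) (f b) (f c) (f d).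
Proof. by apply/matrixP => i j; rewrite !mxE; case: ifP; case: ifP. Qed.

Lemma map_M2grading (R S : comNzRingType) (f : {rmorphism R -> S}) b (M : 'M[R]_2) :
  M2grading b M -> M2grading b (map_mx f M).
Proof. by case: b => -[M_1 M_2]; rewrite /M2grading !mxE M_1 M_2 rmorph0. Qed.

Lemma map_sl2 (R S : comNzRingType) (f : {rmorphism R -> S}) (M : 'M[R]_2) :
  sl2 M -> sl2 (map_mx f M).
Proof. by rewrite /sl2 !mxtrace2 !mxE -rmorphD => ->; rewrite rmorph0. Qed.

Lemma mxtrace_commutator (R : comNzRingType) n (M N : 'M[R]_n.+1) :
  \tr (M * N - N * M) = 0.
Proof. by rewrite raddfB /= -!mulmxE mxtrace_mulC subrr. Qed.

Section GenericMatrices.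
Variable D : comNzRingType.
Implicit Types (x y : 'M[calA D]_2) (b : bool).

Lemma Rgrad_M2grading b x : Rgrad b x -> M2grading b x.
Proof.
elim=> {b x} [|i|i|[] x y _ [x1 x2] _ [y1 y2]|[] [] x y _ [x1 x2] _ [y1 y2]|
               [] d x _ [x1 x2]];
  by rewrite /M2grading ?mulmx2E ?mxE ?x1 ?x2 ?y1 ?y2 ?mul0r ?mulr0 ?addr0.
Qed.

Lemma inS_sl2 x : inS x -> sl2 x.
Proof.
rewrite /sl2; elim=> {x} [i|i|x y _ x0 _ y0|d x _ x0|x y _ _ _ _].
- by rewrite mxtrace2 !mxE addrN.
- by rewrite mxtrace2 !mxE addr0.
- by rewrite mxtraceD x0 y0 addr0.
- by rewrite mxtraceZ x0 mulr0.
- exact: mxtrace_commutator.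
Qed.

Lemma commutator_scA x y : x * y - y * x = x * y + scA (-1) (y * x).
Proof. by rewrite /scA rmorphN1 scaleN1r. Qed.

Lemma Rgrad_inR b x : Rgrad b x -> inR x.
Proof. by elim=> *; constructor. Qed.

Lemma inS_inR x : inS x -> inR x.
Proof.
elim=> {x} [i|i|x y _ ? _ ?|d x _ ?|x y _ Rx _ Ry]; try by constructor.
by rewrite commutator_scA; apply: inR_add; [apply: inR_mul | apply/inR_scale/inR_mul].
Qed.

End GenericMatrices.

Section GenericEvaluation.
Variable D : comNzRingType.

Lemma gvarE i k : gvar D i k = cvar D (i, k).
Proof. by []. Qed.

Definition generic_mx (x : letter) : 'M[calA D]_2 :=
  if x.1 then Zgen D x.2 else Ygen D x.2.

Definition scalar_calA : {rmorphism D -> 'M[calA D]_2} :=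
  GRing.in_alg 'M[calA D]_2 \o malgC.

Lemma scalar_calAE d : scalar_calA d = scA d 1.
Proof. by []. Qed.

Lemma scalar_calA_central d x : scalar_calA d * x = x * scalar_calA d.
Proof. by rewrite scalar_calAE /scA mulr_algl mulr_algr. Qed.

Definition geval (f : freeAlg D) := feval scalar_calA generic_mx f.

Lemma geval1 : geval 1 = 1.
Proof. exact: feval1. Qed.

Lemma geval_letter x : geval << fmu x >> = generic_mx x.
Proof. exact: feval_letter. Qed.

Lemma gevalD f g : geval (f + g) = geval f + geval g.
Proof. exact: fevalD. Qed.

Lemma gevalB f g : geval (f - g) = geval f - geval g.
Proof. exact: fevalB. Qed.

Lemma gevalM f g : geval (f * g) = geval f * geval g.
Proof. exact: (fevalM _ scalar_calA_central). Qed.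

Lemma gevalZ d f : geval (d *: f) = scA d (geval f).
Proof. by rewrite /geval (fevalZ _ scalar_calA_central) /scA mulr_algl. Qed.

Lemma inR_geval x : inR x -> exists f, geval f = x.
Proof.
elim=> {x} [|i|i|x y _ [f <-] _ [g <-]|x y _ [f <-] _ [g <-]|d x _ [f <-]].
- by exists 1; apply: geval1.
- by exists << fmu (false, i) >>; apply: geval_letter (false, i).
- by exists << fmu (true, i) >>; apply: geval_letter (true, i).
- by exists (f + g); rewrite gevalD.
- by exists (f * g); rewrite gevalM.
- by exists (d *: f); rewrite gevalZ.
Qed.

Lemma map_peval_scA v (d : D) : map_mx (peval v) (scA d 1) = d%:A :> 'M[D]_2.
Proof. by rewrite /scA map_mxZ map_mx1 /= pevalC. Qed.

Lemma map_peval_feval v (s : letter -> 'M[calA D]_2) f :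
  map_mx (peval v) (feval (fun d => scA d 1) s f)
  = feval (fun d : D => d%:A : 'M[D]_2) (map_mx (peval v) \o s) f.
Proof.
rewrite (rmorph_feval (map_mx (peval v))).
by apply: eq_feval => // d; apply: map_peval_scA.
Qed.

Lemma map_peval_mx2 v (a b c d : calA D) :
  map_mx (peval v) (mx2 a b c d) = mx2 (peval v a) (peval v b) (peval v c) (peval v d).
Proof. exact: map_mx2. Qed.

Lemma map_peval_Zgen v i :
  map_mx (peval v) (Zgen D i) = mx2 0 (v (i, 1)) (v (i, 2)) 0.
Proof. by rewrite /Zgen map_peval_mx2 rmorph0 !gvarE; congr mx2; apply: peval_cvar. Qed.

Lemma map_peval_Ygen v i :
  map_mx (peval v) (Ygen D i) = mx2 (v (i, 0)) 0 0 (- v (i, 0)).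
Proof.
rewrite /Ygen map_peval_mx2 rmorph0 rmorphN !gvarE.
by congr (mx2 _ _ _ (- _)); apply: peval_cvar.
Qed.

Lemma generic_mx_specialize (s : letter -> 'M[D]_2) :
    (forall i, sl2 (s (false, i)) /\ M2grading false (s (false, i))) ->
    (forall i, sl2 (s (true, i)) /\ M2grading true (s (true, i))) ->
  exists v, forall x, map_mx (peval v) (generic_mx x) = s x.
Proof.
move=> s_even s_odd.
pose v (k : genvar) := match val k.2 with
  | 0 => s (false, k.1) 0 0 | 1 => s (true, k.1) 0 1 | _ => s (true, k.1) 1 0 end.
exists v => -[[] i].
- have [_ [s00 s11]] := s_odd i.
  by rewrite [generic_mx _]/(Zgen D i) map_peval_Zgen [RHS]mx2_eta s00 s11.
- have [tr0 [s01 s10]] := s_even i.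
  have s11 : s (false, i) 1 1 = - s (false, i) 0 0.
    by apply/eqP; rewrite -addr_eq0 addrC -mxtrace2 tr0.
  by rewrite [generic_mx _]/(Ygen D i) map_peval_Ygen [RHS]mx2_eta s01 s10 s11.
Qed.

Lemma Id_M2sl2_geval0 f : geval f = 0 -> Id_M2sl2 f.
Proof.
move=> f0 s s_even s_odd; have [v gen_s] := generic_mx_specialize s_even s_odd.
transitivity (feval (fun d : D => d%:A) (map_mx (peval v) \o generic_mx) f).
  by apply: eq_feval => // x; rewrite /= gen_s.
have geval_scA : feval (fun d => scA d 1) generic_mx f = geval f by apply: eq_feval.
by rewrite -map_peval_feval geval_scA f0 map_mx0.
Qed.

End GenericEvaluation.

Lemma Id_M2sl2_R (D : idomainType)
    (D_infinite : forall s : seq D, exists d : D, d \notin s) (f : freeAlg D) :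
  Id_M2sl2 f ->
  weak_graded_identity (fun d : D => scA d 1) (Rgrad false) (Rgrad true) (@inS D) f.
Proof.
move=> f_id s s_even s_odd; apply/matrixP => r c; rewrite mxE.
apply: (peval_eq0 D_infinite) => v.
have := congr1 (fun M : 'M[D]_2 => M r c) (map_peval_feval v s f); rewrite mxE => ->.
have map_s b x :
    inS x -> Rgrad b x -> sl2 (map_mx (peval v) x) /\ M2grading b (map_mx (peval v) x).
  by move=> Sx Rx; split; [apply/map_sl2/inS_sl2 | apply/map_M2grading/Rgrad_M2grading].
by rewrite f_id ?mxE // => i; [case: (s_even i) | case: (s_odd i)] => /map_s; apply.
Qed.

Section HomomorphismOnR.
Variables (D : comNzRingType) (A : algType D) (s : letter -> A).

(* [Rhom x] evaluates at [s] an arbitrary preimage of [x] under [geval]; on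
   R, the image of [geval], the choice is irrelevant once the evaluation at
   [s] kills the kernel of [geval]. *)
Fact Rhom_key : unit. Proof. by []. Qed.
Definition Rhom : 'M[calA D]_2 -> A := locked_with Rhom_key
  (fun x => feval (in_alg A) s (epsilon (inhabits 0) (fun f => geval f = x))).

Hypothesis geval_ker : forall f, geval f = 0 -> feval (in_alg A) s f = 0.

Let in_alg_central d (a : A) : in_alg A d * a = a * in_alg A d.
Proof. by rewrite /= mulr_algl mulr_algr. Qed.

Lemma Rhom_geval f : Rhom (geval f) = feval (in_alg A) s f.
Proof.
rewrite /Rhom unlock; set g := epsilon _ _; have gf : geval g = geval f.
  exact: (epsilon_spec (inhabits 0) (fun g => geval g = geval f) (ex_intro _ f erefl)).
apply/eqP; rewrite -subr_eq0 -fevalB; apply/eqP/geval_ker.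
by rewrite gevalB gf subrr.
Qed.

Lemma Rhom1 : Rhom 1 = 1.
Proof. by rewrite -(geval1 D) Rhom_geval feval1. Qed.

Lemma Rhom_generic x : Rhom (generic_mx D x) = s x.
Proof. by rewrite -(geval_letter D) Rhom_geval feval_letter. Qed.

Lemma Rhom_Ygen i : Rhom (Ygen D i) = s (false, i).
Proof. exact: Rhom_generic (false, i). Qed.

Lemma Rhom_Zgen i : Rhom (Zgen D i) = s (true, i).
Proof. exact: Rhom_generic (true, i). Qed.

Lemma RhomD x y : inR x -> inR y -> Rhom (x + y) = Rhom x + Rhom y.
Proof.
move=> /inR_geval[f <-] /inR_geval[g <-].
by rewrite -gevalD [LHS]Rhom_geval fevalD; congr (_ + _); rewrite Rhom_geval.
Qed.

Lemma RhomM x y : inR x -> inR y -> Rhom (x * y) = Rhom x * Rhom y.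
Proof.
move=> /inR_geval[f <-] /inR_geval[g <-].
rewrite -gevalM [LHS]Rhom_geval (fevalM _ in_alg_central).
by congr (_ * _); rewrite Rhom_geval.
Qed.

Lemma RhomZ d x : inR x -> Rhom (scA d x) = d *: Rhom x.
Proof.
move=> /inR_geval[f <-].
rewrite -gevalZ [LHS]Rhom_geval (fevalZ _ in_alg_central) /= mulr_algl.
by rewrite Rhom_geval.
Qed.

Lemma Rhom_commutator x y :
  inR x -> inR y -> Rhom (x * y - y * x) = Rhom x * Rhom y - Rhom y * Rhom x.
Proof.
move=> Rx Ry; rewrite commutator_scA RhomD; last by apply/inR_scale/inR_mul.
- by rewrite RhomZ ?scaleN1r; [congr (_ - _); apply: RhomM | apply: inR_mul].
- exact: inR_mul.
Qed.

Lemma Rhom_Rgrad (Ag : bool -> A -> Prop) b x :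
    graded_algebra Ag -> (forall x, Ag x.1 (s x)) ->
  Rgrad b x -> Ag b (Rhom x).
Proof.
move=> [[[_ add0 scale0] [_ add1 scale1]] _ _ Ag1 AgM] Ag_s.
have AgD c : forall u v, Ag c u -> Ag c v -> Ag c (u + v) by case: c.
have AgZ c : forall d u, Ag c u -> Ag c (d *: u) by case: c.
elim=> {b x} [|i|i|c x y Rx ? Ry ?|c c' x y Rx ? Ry ?|c d x Rx ?].
- by rewrite Rhom1.
- by rewrite Rhom_Ygen; apply: Ag_s (false, i).
- by rewrite Rhom_Zgen; apply: Ag_s (true, i).
- by rewrite RhomD; [apply: AgD | apply: Rgrad_inR Rx | apply: Rgrad_inR Ry].
- by rewrite RhomM; [apply: AgM | apply: Rgrad_inR Rx | apply: Rgrad_inR Ry].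
- by rewrite RhomZ; [apply: AgZ | apply: Rgrad_inR Rx].
Qed.

Lemma Rhom_inS (L : A -> Prop) x :
  lie_subalgebra L -> (forall x, L (s x)) -> inS x -> L (Rhom x).
Proof.
move=> [[_ addL scaleL] brL] L_s.
elim=> {x} [i|i|x y Sx Lx Sy Ly|d x Sx Lx|x y Sx Lx Sy Ly].
- by rewrite Rhom_Ygen.
- by rewrite Rhom_Zgen.
- by rewrite RhomD; [apply: addL | apply: inS_inR Sx | apply: inS_inR Sy].
- by rewrite RhomZ; [apply: scaleL | apply: inS_inR Sx].
- by rewrite Rhom_commutator; [apply: brL | apply: inS_inR Sx | apply: inS_inR Sy].
Qed.

Lemma Rhom_unique (Ag : bool -> A -> Prop) (psi : 'M[calA D]_2 -> A) x :
    graded_alg_hom_on_R Ag psi -> (forall x, psi (generic_mx D x) = s x) ->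
  inR x -> psi x = Rhom x.
Proof.
move=> [psi1 psiD psiM psiZ _] psi_s.
elim=> {x} [|i|i|x y Rx IHx Ry IHy|x y Rx IHx Ry IHy|d x Rx IHx].
- by rewrite psi1 Rhom1.
- by rewrite Rhom_Ygen; apply: psi_s (false, i).
- by rewrite Rhom_Zgen; apply: psi_s (true, i).
- by rewrite psiD // RhomD // IHx IHy.
- by rewrite psiM // RhomM // IHx IHy.
- by rewrite psiZ // RhomZ // IHx.
Qed.

End HomomorphismOnR.

Theorem mainTheorem1 (D : idomainType)
    (D_infinite : forall s : seq D, exists d : D, d \notin s) :
  (forall f : freeAlg D, Id_M2sl2 f ->
     weak_graded_identity (fun d : D => scA d 1)
       (Rgrad false) (Rgrad true) (@inS D) f)
  /\
  (forall (A : algType D) (Ag : bool -> A -> Prop) (L : A -> Prop),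
     graded_pair Ag L ->
     (forall f : freeAlg D, Id_M2sl2 f ->
        weak_graded_identity (fun d : D => d%:A) (Ag false) (Ag true) L f) ->
     forall a b : nat -> A,
       (forall i, L (a i) /\ Ag false (a i)) ->
       (forall i, L (b i) /\ Ag true (b i)) ->
       exists psi : 'M[calA D]_2 -> A,
         [/\ graded_alg_hom_on_R Ag psi,
             (forall i, psi (Ygen D i) = a i /\ psi (Zgen D i) = b i),
             (forall psi' : 'M[calA D]_2 -> A,
                graded_alg_hom_on_R Ag psi' ->
                (forall i, psi' (Ygen D i) = a i /\ psi' (Zgen D i) = b i) ->
                forall x, inR x -> psi' x = psi x)
           & (forall x, inS x -> L (psi x))]).
Proof.
split=> [f|A Ag L [gradedA lieL _] A_id a b a_ok b_ok]; first exact: Id_M2sl2_R.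
pose s (x : letter) := if x.1 then b x.2 else a x.2.
have s_ok x : L (s x) /\ Ag x.1 (s x) by case: x => [[] i]; [apply: b_ok | apply: a_ok].
have geval_ker f : geval f = 0 -> feval (in_alg A) s f = 0.
  by move/Id_M2sl2_geval0/A_id; apply=> i; apply: s_ok (_, i).
exists (Rhom s); split.
- split; [exact: Rhom1 | exact: RhomD | exact: RhomM | exact: RhomZ |].
  by move=> c x; apply: Rhom_Rgrad => // x'; case: (s_ok x').
- by move=> i; split; [apply: Rhom_Ygen | apply: Rhom_Zgen].
- move=> psi psi_hom psi_gen x; apply: Rhom_unique psi_hom _ => // -[[] i].
  + exact: (psi_gen i).2.
  + exact: (psi_gen i).1.
- by move=> x; apply: Rhom_inS => // x'; case: (s_ok x').
Qed.
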